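(* Let $X$ be a finite set with $N=|X|\ge 2$, $n=\binom N2$, and let $\mathcal{X}$ be a partition of $X$. Let $\Gamma$ be the set of all $t\in\mathcal{B}(K_N)$ whose coarse type is $\mathcal{X}$. Then $\Gamma$ is tropically convex: for all $s,t\in\Gamma$ and all $\lambda,\mu\in\mathbb{R}$, the coordinatewise maximum $\max\{s+\lambda\mathbb{1},\,t+\mu\mathbb{1}\}$ lies in $\Gamma$.
   Context: Coordinates of $\mathbb{R}^n$ are indexed by unordered pairs $\{a,b\}$ of distinct elements of $X$, written $t_{ab}$; $\mathbb{1}$ is the all-ones vector. The Bergman fan of the complete graphical matroid is $\mathcal{B}(K_N)=\{t\in\mathbb{R}^n : \text{for all pairwise distinct } a,b,c\in X, \text{ the maximum of } t_{ab},t_{ac},t_{bc} \text{ is attained at least twice}\}$; its elements correspond to equidistant phylogenetic trees with leaf set $X$ via $t_{ab}=$ path length between leaves $a,b$. The coarse type of $t\in\mathcal{B}(K_N)$ is the partition $\{X_i\}_{i\in I}$ of $X$ such that, with $M=\max_{a\neq b}t_{ab}$, two distinct elements $a,b$ lie in the same block iff $t_{ab}<M$; equivalently, $\max\{t_{ab}: a\ne b \text{ in a common block}\}<\min\{t_{ab}: a\in X_i,b\in X_j,i\neq j\}=\max\{t_{ab}: a\in X_i,b\in X_j,i\ne j\}$ (these are the leaf sets of the subtrees hanging at the children of the root). *)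

From mathcomp Require Import all_boot all_order all_algebra.
Set Implicit Arguments. Unset Strict Implicit. Unset Printing Implicit Defensive.
Import Order.TTheory GRing.Theory Num.Theory.
Local Open Scope ring_scope.

Definition upair (X : finType) := {A : {set X} | #|A| == 2%N}.

(* A point of R^n, n = binom N 2: a real vector indexed by unordered pairs. *)
Definition pvec (R : realFieldType) (X : finType) := upair X -> R.

(* The coordinate t_{ab}; only meaningful (and only used) for a != b. *)
Definition tc (R : realFieldType) (X : finType) (t : pvec R X) (a b : X) : R :=
  if (insub [set a; b] : option (upair X)) is Some p then t p else 0.

Definition in_bergman (R : realFieldType) (X : finType) (t : pvec R X) : Prop :=
  forall a b c : X, a != b -> a != c -> b != c ->
    let x := tc t a b in let y := tc t a c in let z := tc t b c in
    let m := Num.max x (Num.max y z) in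
    (2 <= (x == m) + (y == m) + (z == m))%N.

Definition is_max_coord (R : realFieldType) (X : finType) (t : pvec R X) (M : R) : Prop :=
  (exists p, t p = M) /\ (forall p, t p <= M).

Definition coarse_type_is (R : realFieldType) (X : finType) (t : pvec R X)
    (P : {set {set X}}) : Prop :=
  exists M, is_max_coord t M /\
    forall a b : X, a != b ->
      ([exists B in P, (a \in B) && (b \in B)] <-> tc t a b < M).

Definition Gamma (R : realFieldType) (X : finType) (P : {set {set X}}) (t : pvec R X) : Prop :=
  in_bergman t /\ coarse_type_is t P.

From mathcomp Require Import all_boot all_order all_algebra lra.
Import Order.TTheory GRing.Theory Num.Theory.
Local Open Scope ring_scope.

(* The Bergman condition says t_ab <= max(t_ac, t_bc) for every triple, and
   u |-> max(u + lam, v + mu) is monotone in each argument, so it survives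
   tropical combination.  The maximal coordinate of the combination is
   max(Ms + lam, Mt + mu); a pair lies below it iff it lies below the maximum
   in s or in t, and since s and t have the same coarse type, a pair lies
   below the maximum in one of them iff it does in the other.  Hence the
   combination has the same coarse type. *)

Lemma max_attained_twice_iff (R : realFieldType) (x y z : R) :
  let m := Num.max x (Num.max y z) in
  (2 <= (x == m) + (y == m) + (z == m))%N <->
  [/\ x <= Num.max y z, y <= Num.max x z & z <= Num.max x y].
Proof.
have eq_max3 (a b c : R) : (a == Num.max a (Num.max b c)) = (b <= a) && (c <= a).
  by rewrite eq_le !le_max lexx /= !ge_max lexx.
rewrite /=.
have -> : (y == Num.max x (Num.max y z)) = (x <= y) && (z <= y).
  by rewrite maxCA eq_max3.
have -> : (z == Num.max x (Num.max y z)) = (x <= z) && (y <= z).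
  by rewrite (maxC y) maxCA eq_max3.
rewrite eq_max3 !le_max.
case: (ltgtP x y) => ?; case: (ltgtP y z) => ?; case: (ltgtP x z) => ? //=;
  try (exfalso; lra); subst; rewrite ?lexx ?ltxx //=; split => //; case => //.
Qed.

Lemma tc_map2 (R : realFieldType) (X : finType) (f : R -> R -> R)
    (s t : pvec R X) (a b : X) :
  a != b -> tc (fun p => f (s p) (t p)) a b = f (tc s a b) (tc t a b).
Proof.
move=> ab; rewrite /tc; case: insubP => [//|].
by rewrite cards2 ab.
Qed.

Lemma tc_le_max_coord (R : realFieldType) (X : finType) (t : pvec R X) (M : R)
    (a b : X) :
  is_max_coord t M -> a != b -> tc t a b <= M.
Proof.
move=> [_ le_tM] ab; rewrite /tc; case: insubP => [p _ _|]; first exact: le_tM.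
by rewrite cards2 ab.
Qed.

Lemma le_max_tropical_comb (R : realDomainType) (x1 y1 z1 x2 y2 z2 l m : R) :
  x1 <= Num.max y1 z1 -> x2 <= Num.max y2 z2 ->
  Num.max (x1 + l) (x2 + m) <=
  Num.max (Num.max (y1 + l) (y2 + m)) (Num.max (z1 + l) (z2 + m)).
Proof.
rewrite ge_max !le_max => /orP[] h1 /orP[] h2;
  by rewrite !lerD2r h1 h2 /= ?orbT.
Qed.

Lemma lt_max_tropical_comb_iff (R : realDomainType) (x y Mx My l m : R) :
  x <= Mx -> y <= My -> (x < Mx <-> y < My) ->
  (Num.max (x + l) (y + m) < Num.max (Mx + l) (My + m) <-> x < Mx).
Proof.
move=> xMx yMy xy; split=> [|ltx].
  case: (ltP x Mx) => // lex.
  have /eqP -> : x == Mx by rewrite eq_le xMx lex.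
  have /eqP -> : y == My.
    by rewrite eq_le yMy leNgt; apply/negP => /xy; rewrite ltNge lex.
  by rewrite ltxx.
by rewrite gt_max !lt_max !ltrD2r ltx (proj1 xy ltx) /= orbT.
Qed.

Section TropicalCombination.

Variables (R : realFieldType) (X : finType) (s t : pvec R X) (lam mu : R).

Definition tropical_comb : pvec R X := fun p => Num.max (s p + lam) (t p + mu).

Lemma tc_tropical_comb (a b : X) : a != b ->
  tc tropical_comb a b = Num.max (tc s a b + lam) (tc t a b + mu).
Proof. exact: (@tc_map2 R X (fun u v => Num.max (u + lam) (v + mu))). Qed.

Lemma in_bergman_tropical_comb :
  in_bergman s -> in_bergman t -> in_bergman tropical_comb.
Proof.
move=> Bs Bt a b c ab ac bc.
have := Bs a b c ab ac bc; have := Bt a b c ab ac bc.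
rewrite /= !tc_tropical_comb // !max_attained_twice_iff.
by case=> ? ? ? [? ? ?]; split; apply: le_max_tropical_comb.
Qed.

Lemma is_max_coord_tropical_comb (Ms Mt : R) :
  is_max_coord s Ms -> is_max_coord t Mt ->
  is_max_coord tropical_comb (Num.max (Ms + lam) (Mt + mu)).
Proof.
move=> [[ps <-] les] [[pt <-] let_]; split; last first.
  by move=> p; rewrite ge_max !le_max !lerD2r les let_ /= orbT.
case: (leP (t pt + mu) (s ps + lam)) => h.
  by exists ps; apply/max_idPl; apply: le_trans h; rewrite lerD2r.
by exists pt; apply/max_idPr; apply: le_trans (ltW h); rewrite lerD2r.
Qed.

Lemma coarse_type_tropical_comb (P : {set {set X}}) :
  coarse_type_is s P -> coarse_type_is t P -> coarse_type_is tropical_comb P.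
Proof.
move=> [Ms [maxs Cs]] [Mt [maxt Ct]].
exists (Num.max (Ms + lam) (Mt + mu)).
split; first exact: is_max_coord_tropical_comb.
move=> a b ab; rewrite tc_tropical_comb // (Cs a b ab).
apply: iff_sym; apply: lt_max_tropical_comb_iff; try exact: tc_le_max_coord.
exact: iff_trans (iff_sym (Cs a b ab)) (Ct a b ab).
Qed.

End TropicalCombination.

Theorem mainTheorem4 (R : realFieldType) (X : finType) (P : {set {set X}}) :
  (2 <= #|X|)%N -> partition P [set: X] ->
  forall (s t : pvec R X) (lam mu : R),
    Gamma P s -> Gamma P t ->
    Gamma P (fun p => Num.max (s p + lam) (t p + mu)).
Proof.
move=> _ _ s t lam mu [Bs Cs] [Bt Ct]; split.
- exact: in_bergman_tropical_comb.
- exact: coarse_type_tropical_comb.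
Qed.
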